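(* Let $\{\gamma_k\}$ be strictly positive numbers with $\gamma_k\to\infty$, and $\{g_k\}$ probability generating functions. Define $$G_k(z)=k\gamma_k[g_k(e^{-z/k})-e^{-z/k}],\ z\ge0,\qquad \phi_k(z)=k\gamma_k[g_k(1-z/k)-(1-z/k)],\ 0\le z\le k.$$ Then $\{G_k\}$ is uniformly Lipschitz on each bounded interval if and only if $\{\phi_k\}$ is. In this case $\lim_{k\to\infty}|\phi_k(z)-G_k(z)|=0$ uniformly in $z$ on each bounded interval.
   Context: ''Uniformly Lipschitz on each bounded interval'' means: for each $a\ge0$ there is a constant $L_a$ such that all the functions (for $\phi_k$: all those with $k\ge a$) are $L_a$-Lipschitz on $[0,a]$. *)

From Stdlib Require Import Reals Lra Lia.
From Coquelicot Require Import Coquelicot.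
Open Scope R_scope.

Definition is_pgf_coeffs (p : nat -> R) : Prop :=
  (forall i, 0 <= p i) /\ is_series p 1.

Definition pgf (p : nat -> R) (s : R) : R := Series (fun i => p i * s ^ i).

Definition G_fun (gamma : nat -> R) (p : nat -> nat -> R) (k : nat) (z : R) : R :=
  INR k * gamma k * (pgf (p k) (exp (- z / INR k)) - exp (- z / INR k)).

Definition phi_fun (gamma : nat -> R) (p : nat -> nat -> R) (k : nat) (z : R) : R :=
  INR k * gamma k * (pgf (p k) (1 - z / INR k) - (1 - z / INR k)).

Definition unif_lip_G (gamma : nat -> R) (p : nat -> nat -> R) : Prop :=
  forall a : R, 0 <= a -> exists L : R,
    forall k : nat, (1 <= k)%nat ->
    forall x y : R, 0 <= x <= a -> 0 <= y <= a ->
      Rabs (G_fun gamma p k x - G_fun gamma p k y) <= L * Rabs (x - y).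

Definition unif_lip_phi (gamma : nat -> R) (p : nat -> nat -> R) : Prop :=
  forall a : R, 0 <= a -> exists L : R,
    forall k : nat, (1 <= k)%nat -> a <= INR k ->
    forall x y : R, 0 <= x <= a -> 0 <= y <= a ->
      Rabs (phi_fun gamma p k x - phi_fun gamma p k y) <= L * Rabs (x - y).

From Stdlib Require Import Reals Lra Lia.
From Coquelicot Require Import Coquelicot.
Open Scope R_scope.

(* Write [h_k(s) = g_k(s) - s], so that [phi_k(z) = k gamma_k h_k(1 - z/k)] and
   [G_k(z) = k gamma_k h_k(e^{-z/k})].  The difference quotient of [g_k] on [[t, s]] is
   [sum_i p_i (s^(i-1) + s^(i-2) t + ... + t^(i-1))], which is nonnegative and
   nondecreasing in both endpoints.  Hence both Lipschitz conditions say that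
   [gamma_k |Delta h_k|] stays bounded on an interval [[c_k, 1]] of length of order [a/k];
   since [e^{-2x} <= 1 - x <= e^{-x}] for [0 <= x <= 1/2], the two families of intervals
   are nested into each other, and monotonicity extends a bound on any [[c, 1]], [c < 1],
   to all of [[0, 1]], which handles the finitely many small [k].  Finally
   [|phi_k(z) - G_k(z)| <= k gamma_k |Delta h_k| (e^{-z/k} - 1 + z/k) <= L a^2 / k]. *)

Fixpoint pow_quot (i : nat) (t s : R) : R :=
  match i with O => 0 | S j => s ^ j + t * pow_quot j t s end.

Lemma pow_sub_pow i t s : s ^ i - t ^ i = (s - t) * pow_quot i t s.
Proof.
  induction i as [|i IH]; simpl; [ring|].
  replace (s * s ^ i - t * t ^ i) with (s ^ i * (s - t) + t * (s ^ i - t ^ i)) by ring.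
  rewrite IH; ring.
Qed.

Lemma pow_quot_ge0 i t s : 0 <= t -> 0 <= s -> 0 <= pow_quot i t s.
Proof.
  intros Ht Hs; induction i as [|i IH]; simpl; [lra|].
  pose proof (pow_le s i Hs); nra.
Qed.

Lemma pow_quot_le i t s t' s' :
  0 <= t <= t' -> 0 <= s <= s' -> pow_quot i t s <= pow_quot i t' s'.
Proof.
  intros Ht Hs; induction i as [|i IH]; simpl; [lra|].
  pose proof (pow_incr s s' i Hs).
  pose proof (pow_quot_ge0 i t s (proj1 Ht) (proj1 Hs)); nra.
Qed.

Definition pgf_slope (p : nat -> R) (t s : R) : R :=
  Series (fun i => p i * pow_quot i t s).

(* [pgf_slope p t s - 1] is the difference quotient of [s |-> g(s) - s] on [t, s]. *)
Definition slope_dev_le (p : nat -> R) (c M : R) : Prop :=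
  forall t s, c <= t -> t < s -> s <= 1 -> Rabs (pgf_slope p t s - 1) <= M.

Lemma slope_dev_le_weaken p c c' M M' : c <= c' -> M <= M' ->
  slope_dev_le p c M -> slope_dev_le p c' M'.
Proof. intros Hc HM H t s Ht Hts Hs; specialize (H t s ltac:(lra) Hts Hs); lra. Qed.

Section PgfSlope.
Variable p : nat -> R.
Hypothesis Hp : is_pgf_coeffs p.

Lemma ex_series_pgf s : 0 <= s <= 1 -> ex_series (fun i => p i * s ^ i).
Proof.
  destruct Hp as [Hp0 Hp1]; intros Hs.
  apply (@ex_series_le R_AbsRing R_CompleteNormedModule _ p); [|now exists 1].
  intros n; change (norm (p n * s ^ n)) with (Rabs (p n * s ^ n)).
  pose proof (pow_le s n (proj1 Hs)).
  assert (s ^ n <= 1) by (rewrite <- (pow1 n); apply pow_incr; lra).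
  specialize (Hp0 n); rewrite Rabs_right by (apply Rle_ge; nra); nra.
Qed.

Lemma is_series_pgf_slope t s : 0 <= t -> t < s -> s <= 1 ->
  is_series (fun i => p i * pow_quot i t s) ((pgf p s - pgf p t) / (s - t)).
Proof.
  intros Ht Hts Hs.
  assert (E : forall i, / (s - t) * (p i * s ^ i - p i * t ^ i) = p i * pow_quot i t s).
  { intros i; replace (p i * s ^ i - p i * t ^ i) with (p i * (s ^ i - t ^ i)) by ring.
    rewrite pow_sub_pow; field; lra. }
  apply (is_series_ext _ _ _ E).
  replace ((pgf p s - pgf p t) / (s - t)) with (/ (s - t) * (pgf p s - pgf p t)) by (field; lra).
  apply (@is_series_scal_l R_AbsRing R_NormedModule).
  apply (@is_series_minus R_AbsRing R_NormedModule); apply Series_correct, ex_series_pgf; lra.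
Qed.

Lemma pgf_sub_pgf t s : 0 <= t -> t < s -> s <= 1 ->
  pgf p s - pgf p t = (s - t) * pgf_slope p t s.
Proof.
  intros Ht Hts Hs; unfold pgf_slope.
  rewrite (is_series_unique _ _ (is_series_pgf_slope t s Ht Hts Hs)); field; lra.
Qed.

Lemma pgf_slope_le t s t' s' : 0 <= t -> t < s -> t <= t' -> t' < s' -> s <= s' -> s' <= 1 ->
  pgf_slope p t s <= pgf_slope p t' s'.
Proof.
  intros; apply Series_le; [|eexists; apply is_series_pgf_slope; lra].
  intros n; pose proof (proj1 Hp n); split.
  - apply Rmult_le_pos; [lra | apply pow_quot_ge0; lra].
  - apply Rmult_le_compat_l; [lra | apply pow_quot_le; lra].
Qed.

Lemma pgf_slope_ge0 t s : 0 <= t -> t < s -> s <= 1 -> 0 <= pgf_slope p t s.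
Proof.
  intros Ht Hts Hs; unfold pgf_slope.
  replace 0 with (Series (fun i => 0 * (p i * pow_quot i t s))) by (rewrite Series_scal_l; ring).
  apply Series_le; [|eexists; apply is_series_pgf_slope; lra].
  intros n; pose proof (proj1 Hp n); pose proof (pow_quot_ge0 n t s Ht ltac:(lra)); split; nra.
Qed.

Lemma pgf_id_sub t s : 0 <= t -> t < s -> s <= 1 ->
  (pgf p s - s) - (pgf p t - t) = (s - t) * (pgf_slope p t s - 1).
Proof. intros; rewrite Rmult_minus_distr_l, <- pgf_sub_pgf by lra; ring. Qed.

Lemma Rabs_pgf_id_sub_le c M t s : slope_dev_le p c M -> c <= t -> 0 <= t -> t <= s -> s <= 1 ->
  Rabs ((pgf p s - s) - (pgf p t - t)) <= M * (s - t).
Proof.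
  intros HM Hct Ht [Hts | <-] Hs.
  - rewrite pgf_id_sub, Rabs_mult, Rabs_right by lra.
    rewrite Rmult_comm; apply Rmult_le_compat_r; [lra | now apply HM].
  - rewrite !Rminus_diag, Rabs_R0; lra.
Qed.

Lemma slope_dev_le_0 c M : c < 1 -> slope_dev_le p c M -> slope_dev_le p 0 (Rmax 1 M).
Proof.
  intros Hc H t s Ht Hts Hs.
  assert (Hup : pgf_slope p t s <= pgf_slope p (Rmax t c) 1).
  { apply pgf_slope_le; try lra; [apply Rmax_l | apply Rmax_lub_lt; lra]. }
  specialize (H (Rmax t c) 1 (Rmax_r t c) ltac:(apply Rmax_lub_lt; lra) ltac:(lra)).
  apply Rabs_le_between in H.
  pose proof (pgf_slope_ge0 t s Ht Hts Hs).
  pose proof (Rmax_l 1 M); pose proof (Rmax_r 1 M).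
  apply Rabs_le; lra.
Qed.
End PgfSlope.

Lemma Rdiv_le_mono K x y : 0 < K -> x <= y -> x / K <= y / K.
Proof. intros; apply Rmult_le_compat_r; [left; apply Rinv_0_lt_compat |]; lra. Qed.

Lemma Rdiv_le_1 K x : 0 < K -> x <= K -> x / K <= 1.
Proof. intros; replace 1 with (K / K) by (field; lra); apply Rdiv_le_mono; lra. Qed.

Lemma exp_le_exp_le x y : x <= y -> exp x <= exp y.
Proof. intros [H | <-]; [now left; apply exp_increasing | lra]. Qed.

Lemma exp_opp_le_1 x : 0 <= x -> exp (- x) <= 1.
Proof. intros; rewrite <- exp_0; apply exp_le_exp_le; lra. Qed.

Lemma one_sub_le_exp_opp x : 1 - x <= exp (- x).
Proof. pose proof (exp_ineq1_le (- x)); lra. Qed.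

Lemma exp_opp_sub_le u v : 0 <= u <= v -> exp (- u) - exp (- v) <= v - u.
Proof.
  intros Huv.
  replace (exp (- v)) with (exp (- u) * exp (- (v - u))) by (rewrite <- exp_plus; f_equal; ring).
  pose proof (one_sub_le_exp_opp (v - u)); pose proof (exp_opp_le_1 u (proj1 Huv)).
  pose proof (exp_pos (- u)); nra.
Qed.

Lemma exp_opp_sub_one_sub_le x : 0 <= x -> exp (- x) - (1 - x) <= x ^ 2.
Proof.
  intros Hx; rewrite exp_Ropp.
  assert (/ exp x <= / (1 + x)) by (apply Rinv_le_contravar; [lra | apply exp_ineq1_le]).
  assert (/ (1 + x) - (1 - x) = x ^ 2 / (1 + x)) by (field; lra).
  assert (x ^ 2 / (1 + x) <= x ^ 2).
  { apply Rmult_le_reg_l with (1 + x); [lra|].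
    replace ((1 + x) * (x ^ 2 / (1 + x))) with (x ^ 2) by (field; lra).
    pose proof (pow2_ge_0 x); nra. }
  lra.
Qed.

Lemma exp_opp_double_le x : 0 <= x <= 1 / 2 -> exp (- (2 * x)) <= 1 - x.
Proof.
  intros Hx; rewrite exp_Ropp.
  apply Rle_trans with (/ (1 + 2 * x)); [apply Rinv_le_contravar; [lra | apply exp_ineq1_le]|].
  apply Rmult_le_reg_l with (1 + 2 * x); [lra|]; rewrite Rinv_r by lra; nra.
Qed.

Lemma ln_sub_le t s : 0 < t <= s -> ln s - ln t <= (s - t) / t.
Proof.
  intros Hts; rewrite <- ln_div by lra.
  pose proof (exp_ineq1_le (ln (s / t))); rewrite exp_ln in * by (apply Rdiv_lt_0_compat; lra).
  replace ((s - t) / t) with (s / t - 1) by (field; lra); lra.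
Qed.

Definition lipschitz_on (f : R -> R) (a L : R) : Prop :=
  forall x y, 0 <= x <= a -> 0 <= y <= a -> Rabs (f x - f y) <= L * Rabs (x - y).

Lemma lipschitz_on_le f a L L' : L <= L' -> lipschitz_on f a L -> lipschitz_on f a L'.
Proof.
  intros HL H x y Hx Hy; pose proof (Rabs_pos (x - y)); specialize (H x y Hx Hy); nra.
Qed.

Lemma lipschitz_on_ordered f a L :
  (forall x y, 0 <= x -> x <= y -> y <= a -> Rabs (f y - f x) <= L * (y - x)) ->
  lipschitz_on f a L.
Proof.
  intros H x y Hx Hy; destruct (Rle_or_lt x y).
  - rewrite Rabs_minus_sym, (Rabs_minus_sym x), (Rabs_right (y - x)) by lra; apply H; lra.
  - rewrite (Rabs_right (x - y)) by lra; apply H; lra.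
Qed.

Lemma ex_uniform_bound (P : nat -> R -> Prop) :
  (forall k M M', M <= M' -> P k M -> P k M') ->
  (forall k, exists M, P k M) ->
  (exists N M, forall k, (N <= k)%nat -> P k M) ->
  exists M, forall k, P k M.
Proof.
  intros Hmono Heach [N [M HM]].
  assert (Hinit : forall n, exists M, forall k, (k < n)%nat -> P k M).
  { induction n as [|n [M1 HM1]]; [exists 0; intros; lia|].
    destruct (Heach n) as [M2 HM2]; exists (Rmax M1 M2); intros k Hk.
    destruct (Nat.eq_dec k n) as [-> | Hkn].
    - apply (Hmono _ M2); [apply Rmax_r | exact HM2].
    - apply (Hmono _ M1); [apply Rmax_l | apply HM1; lia]. }
  destruct (Hinit N) as [M' HM']; exists (Rmax M M'); intros k.
  destruct (Nat.lt_ge_cases k N).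
  - apply (Hmono _ M'); [apply Rmax_r | auto].
  - apply (Hmono _ M); [apply Rmax_l | auto].
Qed.

Section FixedIndex.
Variables (gamma : nat -> R) (p : nat -> nat -> R) (k : nat).
Hypotheses (Hgk : 0 < gamma k) (Hpk : is_pgf_coeffs (p k)) (HK : 1 <= INR k).

Lemma lipschitz_phi_of_slope_dev a M : a <= INR k ->
  slope_dev_le (p k) (1 - a / INR k) M -> lipschitz_on (phi_fun gamma p k) a (gamma k * M).
Proof.
  intros Ha HM; apply lipschitz_on_ordered; intros x y Hx Hxy Hya; unfold phi_fun.
  set (K := INR k) in *.
  assert (y / K <= a / K) by (apply Rdiv_le_mono; lra).
  assert (x / K <= y / K) by (apply Rdiv_le_mono; lra).
  assert (0 <= x / K) by (apply Rdiv_le_0_compat; lra).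
  assert (a / K <= 1) by (apply Rdiv_le_1; lra).
  rewrite <- Rmult_minus_distr_l, Rabs_mult, Rabs_minus_sym, (Rabs_right (K * gamma k)) by nra.
  eapply Rle_trans.
  { apply Rmult_le_compat_l; [nra|].
    apply (Rabs_pgf_id_sub_le (p k) Hpk (1 - a / K) M); [exact HM | lra ..]. }
  right; field; lra.
Qed.

Lemma slope_dev_of_lipschitz_phi a L : 0 <= a <= INR k ->
  lipschitz_on (phi_fun gamma p k) a L -> slope_dev_le (p k) (1 - a / INR k) (Rabs L / gamma k).
Proof.
  intros Ha HL t s Ht Hts Hs; set (K := INR k) in *.
  apply (lipschitz_on_le _ _ L (Rabs L) (Rle_abs L)) in HL.
  assert (a / K <= 1) by (apply Rdiv_le_1; lra).
  assert (a = K * (a / K)) by (field; lra).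
  specialize (HL (K * (1 - s)) (K * (1 - t)) ltac:(nra) ltac:(nra)); unfold phi_fun in HL.
  fold K in HL.
  replace (1 - K * (1 - s) / K) with s in HL by (field; lra).
  replace (1 - K * (1 - t) / K) with t in HL by (field; lra).
  replace (K * (1 - s) - K * (1 - t)) with (- (K * (s - t))) in HL by ring.
  rewrite <- Rmult_minus_distr_l, (pgf_id_sub (p k) Hpk), Rabs_Ropp, !Rabs_mult, (Rabs_right K),
    (Rabs_right (gamma k)), (Rabs_right (s - t)) in HL by lra.
  apply Rmult_le_reg_l with (gamma k * (K * (s - t))); [apply Rmult_lt_0_compat; nra|].
  replace (gamma k * (K * (s - t)) * (Rabs L / gamma k)) with (Rabs L * (K * (s - t)))
    by (field; lra).
  nra.
Qed.

Lemma lipschitz_G_of_slope_dev a c M : 0 <= M -> c <= exp (- a / INR k) ->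
  slope_dev_le (p k) c M -> lipschitz_on (G_fun gamma p k) a (gamma k * M).
Proof.
  intros HM0 Hc HM; apply lipschitz_on_ordered; intros x y Hx Hxy Hya; unfold G_fun.
  set (K := INR k) in *.
  replace (- a / K) with (- (a / K)) in Hc by (field; lra).
  replace (- x / K) with (- (x / K)) by (field; lra).
  replace (- y / K) with (- (y / K)) by (field; lra).
  assert (y / K <= a / K) by (apply Rdiv_le_mono; lra).
  assert (x / K <= y / K) by (apply Rdiv_le_mono; lra).
  assert (0 <= x / K) by (apply Rdiv_le_0_compat; lra).
  pose proof (exp_opp_sub_le (x / K) (y / K) ltac:(lra)).
  pose proof (exp_opp_le_1 (x / K) ltac:(lra)).
  assert (exp (- (a / K)) <= exp (- (y / K))) by (apply exp_le_exp_le; lra).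
  assert (exp (- (y / K)) <= exp (- (x / K))) by (apply exp_le_exp_le; lra).
  pose proof (exp_pos (- (y / K))).
  rewrite <- Rmult_minus_distr_l, Rabs_mult, Rabs_minus_sym, (Rabs_right (K * gamma k)) by nra.
  eapply Rle_trans.
  { apply Rmult_le_compat_l; [nra|].
    apply (Rabs_pgf_id_sub_le (p k) Hpk c M); [exact HM | lra ..]. }
  apply Rle_trans with (K * gamma k * (M * ((y - x) / K))); [|right; field; lra].
  apply Rmult_le_compat_l; [nra|].
  apply Rmult_le_compat_l; [lra|].
  replace ((y - x) / K) with (y / K - x / K) by (field; lra); lra.
Qed.

Lemma slope_dev_of_lipschitz_G b L : 0 <= b ->
  lipschitz_on (G_fun gamma p k) b L ->
  slope_dev_le (p k) (exp (- b / INR k)) (Rabs L * exp (b / INR k) / gamma k).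
Proof.
  intros Hb HL t s Ht Hts Hs; set (K := INR k) in *.
  pose proof (exp_pos (- b / K)).
  assert (Hlnt : - b / K <= ln t) by (rewrite <- (ln_exp (- b / K)); apply ln_le; lra).
  assert (ln t < ln s) by (apply ln_increasing; lra).
  assert (ln s <= 0) by (rewrite <- ln_1; apply ln_le; lra).
  assert (- b <= K * ln t).
  { replace (- b) with (K * (- b / K)) by (field; lra); apply Rmult_le_compat_l; lra. }
  specialize (HL (- (K * ln s)) (- (K * ln t)) ltac:(nra) ltac:(nra)); unfold G_fun in HL.
  fold K in HL.
  replace (- - (K * ln s) / K) with (ln s) in HL by (field; lra).
  replace (- - (K * ln t) / K) with (ln t) in HL by (field; lra).
  replace (- (K * ln s) - - (K * ln t)) with (- (K * (ln s - ln t))) in HL by ring.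
  rewrite !exp_ln in HL by lra.
  rewrite <- Rmult_minus_distr_l, (pgf_id_sub (p k) Hpk), Rabs_Ropp, !Rabs_mult, (Rabs_right K),
    (Rabs_right (gamma k)), (Rabs_right (s - t)), (Rabs_right (ln s - ln t)) in HL by lra.
  assert (Hinvt : / t <= exp (b / K)).
  { replace (exp (b / K)) with (/ exp (- b / K)) by
      (rewrite <- exp_Ropp; f_equal; field; lra).
    apply Rinv_le_contravar; lra. }
  assert (Hln : ln s - ln t <= (s - t) * exp (b / K)).
  { eapply Rle_trans; [apply ln_sub_le; lra|].
    unfold Rdiv; apply Rmult_le_compat_l; lra. }
  assert (HL' : K * gamma k * ((s - t) * Rabs (pgf_slope (p k) t s - 1))
                <= Rabs L * (K * ((s - t) * exp (b / K)))).
  { eapply Rle_trans; [exact HL|].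
    apply Rle_trans with (Rabs L * (K * (ln s - ln t))).
    - apply Rmult_le_compat_r; [nra | apply Rle_abs].
    - apply Rmult_le_compat_l; [apply Rabs_pos|]; apply Rmult_le_compat_l; lra. }
  apply Rmult_le_reg_l with (gamma k * (K * (s - t))); [apply Rmult_lt_0_compat; nra|].
  replace (gamma k * (K * (s - t)) * (Rabs L * exp (b / K) / gamma k))
    with (Rabs L * (K * ((s - t) * exp (b / K)))) by (field; lra).
  nra.
Qed.

Lemma Rabs_phi_sub_G_le a M z : a <= INR k -> 0 <= M ->
  slope_dev_le (p k) (1 - a / INR k) M -> 0 <= z <= a ->
  Rabs (phi_fun gamma p k z - G_fun gamma p k z) <= gamma k * M * a ^ 2 / INR k.
Proof.
  intros Ha HM0 HM Hz; unfold phi_fun, G_fun; set (K := INR k) in *.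
  replace (- z / K) with (- (z / K)) by (field; lra).
  assert (z / K <= a / K) by (apply Rdiv_le_mono; lra).
  assert (0 <= z / K) by (apply Rdiv_le_0_compat; lra).
  assert (a / K <= 1) by (apply Rdiv_le_1; lra).
  pose proof (one_sub_le_exp_opp (z / K)); pose proof (exp_opp_le_1 (z / K) ltac:(lra)).
  pose proof (exp_opp_sub_one_sub_le (z / K) ltac:(lra)).
  assert ((z / K) ^ 2 <= (a / K) ^ 2) by (apply pow_incr; lra).
  rewrite <- Rmult_minus_distr_l, Rabs_mult, Rabs_minus_sym, (Rabs_right (K * gamma k)) by nra.
  eapply Rle_trans.
  { apply Rmult_le_compat_l; [nra|].
    apply (Rabs_pgf_id_sub_le (p k) Hpk (1 - a / K) M); [exact HM | lra ..]. }
  apply Rle_trans with (K * gamma k * (M * (a / K) ^ 2)); [|right; field; lra].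
  apply Rmult_le_compat_l; [nra|]; apply Rmult_le_compat_l; lra.
Qed.

End FixedIndex.

Section UniformFamilies.
Variables (gamma : nat -> R) (p : nat -> nat -> R).
Hypotheses (Hgpos : forall k, 0 < gamma k) (Hpgf : forall k, is_pgf_coeffs (p k)).

Lemma slope_dev_global_of_unif_lip_G k : (1 <= k)%nat -> unif_lip_G gamma p ->
  exists M, 0 <= M /\ slope_dev_le (p k) 0 M.
Proof.
  intros Hk HG; assert (HK : 1 <= INR k) by (apply (le_INR 1); lia).
  destruct (HG 1 ltac:(lra)) as [L HL].
  eexists; split; [| apply (slope_dev_le_0 _ (Hpgf k) (exp (- 1 / INR k)))].
  - eapply Rle_trans; [| apply Rmax_l]; lra.
  - rewrite <- exp_0; apply exp_increasing.
    assert (0 < 1 / INR k) by (apply Rdiv_lt_0_compat; lra).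
    replace (- 1 / INR k) with (- (1 / INR k)) by (field; lra); lra.
  - apply (slope_dev_of_lipschitz_G gamma p k (Hgpos k) (Hpgf k) HK 1 L); [lra | exact (HL k Hk)].
Qed.

Lemma slope_dev_global_of_unif_lip_phi k : (1 <= k)%nat -> unif_lip_phi gamma p ->
  exists M, 0 <= M /\ slope_dev_le (p k) 0 M.
Proof.
  intros Hk HP; assert (HK : 1 <= INR k) by (apply (le_INR 1); lia).
  destruct (HP 1 ltac:(lra)) as [L HL].
  eexists; split; [| apply (slope_dev_le_0 _ (Hpgf k) (1 - 1 / INR k))].
  - eapply Rle_trans; [| apply Rmax_l]; lra.
  - assert (0 < 1 / INR k) by (apply Rdiv_lt_0_compat; lra); lra.
  - apply (slope_dev_of_lipschitz_phi gamma p k (Hgpos k) (Hpgf k) HK 1 L);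
      [lra | exact (HL k Hk HK)].
Qed.

(* For [k >= 2a]: [1 - a/k >= e^{-2a/k}], so the bound from [G_k] on [0, 2a] covers
   the interval seen by [phi_k] on [0, a]. *)
Lemma unif_lip_phi_of_G : unif_lip_G gamma p -> unif_lip_phi gamma p.
Proof.
  intros HG a Ha.
  apply (ex_uniform_bound (fun k L => (1 <= k)%nat -> a <= INR k ->
           lipschitz_on (phi_fun gamma p k) a L)).
  - intros k M M' HMM' H Hk Hak; apply (lipschitz_on_le _ _ M); auto.
  - intros k; destruct (Nat.lt_ge_cases k 1) as [? | Hk]; [exists 0; intros; lia|].
    destruct (slope_dev_global_of_unif_lip_G k Hk HG) as [M [HM0 HM]].
    exists (gamma k * M); intros _ Hak.
    assert (HK : 1 <= INR k) by (apply (le_INR 1); lia).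
    apply lipschitz_phi_of_slope_dev; auto.
    apply (slope_dev_le_weaken _ 0 _ M); auto; [|lra].
    assert (a / INR k <= 1) by (apply Rdiv_le_1; lra); lra.
  - destruct (HG (2 * a) ltac:(lra)) as [L HL].
    destruct (INR_unbounded (2 * a)) as [N HN].
    exists N, (Rabs L * exp 1); intros k HNk Hk Hak.
    assert (HK : 1 <= INR k) by (apply (le_INR 1); lia).
    assert (H2a : 2 * a <= INR k) by (apply le_INR in HNk; lra).
    assert (Hak' : 0 <= a / INR k <= 1 / 2).
    { split; [apply Rdiv_le_0_compat; lra|].
      apply Rmult_le_reg_l with (INR k); [lra|]; field_simplify; lra. }
    pose proof (Hgpos k).
    replace (Rabs L * exp 1) with (gamma k * (Rabs L * exp 1 / gamma k)) by (field; lra).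
    apply lipschitz_phi_of_slope_dev; auto.
    apply (slope_dev_le_weaken _ (exp (- (2 * a) / INR k)) _
             (Rabs L * exp (2 * a / INR k) / gamma k)).
    + replace (- (2 * a) / INR k) with (- (2 * (a / INR k))) by (field; lra).
      apply exp_opp_double_le; lra.
    + apply Rdiv_le_mono; auto; apply Rmult_le_compat_l; [apply Rabs_pos|].
      apply exp_le_exp_le; replace (2 * a / INR k) with (2 * (a / INR k)) by (field; lra); lra.
    + apply slope_dev_of_lipschitz_G; auto; [lra | exact (HL k Hk)].
Qed.

Lemma unif_lip_G_of_phi : unif_lip_phi gamma p -> unif_lip_G gamma p.
Proof.
  intros HP a Ha.
  apply (ex_uniform_bound (fun k L => (1 <= k)%nat -> lipschitz_on (G_fun gamma p k) a L)).
  - intros k M M' HMM' H Hk; apply (lipschitz_on_le _ _ M); auto.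
  - intros k; destruct (Nat.lt_ge_cases k 1) as [? | Hk]; [exists 0; intros; lia|].
    destruct (slope_dev_global_of_unif_lip_phi k Hk HP) as [M [HM0 HM]].
    exists (gamma k * M); intros _.
    assert (HK : 1 <= INR k) by (apply (le_INR 1); lia).
    apply (lipschitz_G_of_slope_dev gamma p k (Hgpos k) (Hpgf k) HK a 0 M); auto.
    left; apply exp_pos.
  - destruct (HP a Ha) as [L HL].
    destruct (INR_unbounded a) as [N HN].
    exists N, (Rabs L); intros k HNk Hk.
    assert (HK : 1 <= INR k) by (apply (le_INR 1); lia).
    assert (Hak : a <= INR k) by (apply le_INR in HNk; lra).
    pose proof (Hgpos k).
    replace (Rabs L) with (gamma k * (Rabs L / gamma k)) by (field; lra).
    apply (lipschitz_G_of_slope_dev gamma p k (Hgpos k) (Hpgf k) HK a (1 - a / INR k)).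
    + apply Rdiv_le_0_compat; [apply Rabs_pos | lra].
    + replace (- a / INR k) with (- (a / INR k)) by (field; lra); apply one_sub_le_exp_opp.
    + apply slope_dev_of_lipschitz_phi; auto; exact (HL k Hk Hak).
Qed.

Lemma phi_sub_G_unif_cvg : unif_lip_phi gamma p ->
  forall a, 0 <= a -> forall eps, 0 < eps ->
  exists N : nat, forall k : nat, (N <= k)%nat -> (1 <= k)%nat -> a <= INR k ->
  forall z, 0 <= z <= a -> Rabs (phi_fun gamma p k z - G_fun gamma p k z) < eps.
Proof.
  intros HP a Ha eps Heps; destruct (HP a Ha) as [L HL].
  destruct (INR_unbounded (Rabs L * a ^ 2 / eps)) as [N HN].
  exists N; intros k HNk Hk Hak z Hz.
  assert (HK : 1 <= INR k) by (apply (le_INR 1); lia).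
  assert (HNK : Rabs L * a ^ 2 / eps < INR k) by (apply le_INR in HNk; lra).
  pose proof (Hgpos k).
  eapply Rle_lt_trans.
  { apply (Rabs_phi_sub_G_le _ _ _ (Hgpos k) (Hpgf k) HK a (Rabs L / gamma k)); auto.
    - apply Rdiv_le_0_compat; [apply Rabs_pos | lra].
    - apply slope_dev_of_lipschitz_phi; auto; exact (HL k Hk Hak). }
  replace (gamma k * (Rabs L / gamma k) * a ^ 2 / INR k) with (Rabs L * a ^ 2 / INR k)
    by (field; lra).
  apply Rmult_lt_reg_r with (INR k / eps); [apply Rdiv_lt_0_compat; lra|].
  replace (Rabs L * a ^ 2 / INR k * (INR k / eps)) with (Rabs L * a ^ 2 / eps) by (field; lra).
  replace (eps * (INR k / eps)) with (INR k) by (field; lra); lra.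
Qed.

End UniformFamilies.

Theorem proposition2p1p1 (gamma : nat -> R) (p : nat -> nat -> R)
  (Hgpos : forall k, 0 < gamma k)
  (Hginf : is_lim_seq gamma p_infty)
  (Hpgf : forall k, is_pgf_coeffs (p k)) :
  (unif_lip_G gamma p <-> unif_lip_phi gamma p) /\
  (unif_lip_G gamma p ->
   forall a : R, 0 <= a -> forall eps : R, 0 < eps ->
   exists N : nat, forall k : nat, (N <= k)%nat -> (1 <= k)%nat -> a <= INR k ->
   forall z : R, 0 <= z <= a ->
     Rabs (phi_fun gamma p k z - G_fun gamma p k z) < eps).
Proof.
  pose proof (unif_lip_phi_of_G gamma p Hgpos Hpgf) as G_to_phi.
  split; [split; [exact G_to_phi | exact (unif_lip_G_of_phi gamma p Hgpos Hpgf)]|].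
  intros HG; exact (phi_sub_G_unif_cvg gamma p Hgpos Hpgf (G_to_phi HG)).
Qed.
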